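(* Let $\big((\mathbf{v},\psi,p),(\mathbf{v}',\psi',p')\big)$ be an autonomous MCNF–CCNF pair (as defined in the context). Then for all $\mathbf{x}\in\mathcal{X}$ and $t\ge0$, $$\frac{\mathrm{d}\psi(\mathbf{x},t)}{\mathrm{d}t}\in\mathrm{co}\left\{\mathbf{v}'(\psi(\mathbf{x},t)\mid\mathbf{x}')\ \middle|\ \mathbf{x}'\in\mathcal{X}'\right\},$$ where $\mathrm{co}$ denotes the convex hull.
   Context: Let $\mathcal{X}\subseteq\mathbb{R}^n$ be the state space. A continuous normalizing flow (CNF) on $\mathcal{X}$ is a triple $(\mathbf{v},\psi,p)$ of a continuously differentiable vector field $\mathbf{v}(\mathbf{x},t)$, a flow map $\psi(\mathbf{x},t)$ and time-dependent probability densities $p(\mathbf{x},t)$, $t\ge0$, with $\frac{\mathrm{d}}{\mathrm{d}t}\psi(\mathbf{x},t)=\mathbf{v}(\psi(\mathbf{x},t),t)$ and $\partial_tp=-\nabla_{\mathbf{x}}\cdot(\mathbf{v}p)$. A target density $q'$ lives on a target set $\mathcal{X}'\subset\mathcal{X}$. A conditional CNF (CCNF) is a family of CNFs $(\mathbf{v}'(\cdot\mid\mathbf{x}'),\psi'(\cdot\mid\mathbf{x}'),p'(\cdot\mid\mathbf{x}'))$, $\mathbf{x}'\in\mathcal{X}'$, with $p'(\cdot,T\mid\mathbf{x}')\approx\delta_{\mathbf{x}'}$ for some $T$. An MCNF for it is a CNF $(\mathbf{v},\psi,p)$ with $p(\mathbf{x},t)=\int_{\mathcal{X}'}p'(\mathbf{x},t\mid\mathbf{x}')q'(\mathbf{x}')\mathrm{d}\mathbf{x}'$;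 for such pairs the MCNF vector field is $\mathbf{v}(\mathbf{x},t)=\int_{\mathcal{X}'}\frac{\mathbf{v}'(\mathbf{x},t\mid\mathbf{x}')p'(\mathbf{x},t\mid\mathbf{x}')q'(\mathbf{x}')}{p(\mathbf{x},t)}\mathrm{d}\mathbf{x}'$. An MCNF–CCNF pair is autonomous if $\mathcal{X}=\mathcal{Z}\times\mathcal{T}$, $\mathcal{T}\subset\mathbb{R}$, $\mathbf{x}=(\mathbf{z},\tau)$, $\mathbf{x}'=(\mathbf{z}',\tau')$, $q'=q'_{\mathbf{z}}(\mathbf{z})q'_\tau(\tau)$, the CCNF vector field is time-independent, $\mathbf{v}'(\mathbf{x}\mid\mathbf{x}')=(\mathbf{v}'_{\mathbf{z}}(\mathbf{z}\mid\mathbf{z}'),v'_\tau(\tau\mid\tau'))$, flow map and density split accordingly ($\psi'=(\psi'_{\mathbf{z}},\psi'_\tau)$, $p'=p'_{\mathbf{z}}p'_\tau$), and for some $\tau_0\ne\tau_1$: $q'_\tau=\delta_{\tau_1}$ and $p'_\tau(\tau,t\mid\tau')=\delta_{\psi'_\tau(\tau_0,t\mid\tau')}(\tau)$. *)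

From HB Require Import structures.
From mathcomp Require Import all_boot all_order all_algebra.
From mathcomp Require Import all_classical all_reals all_analysis.
Set Implicit Arguments. Unset Strict Implicit. Unset Printing Implicit Defensive.
Import Order.TTheory GRing.Theory Num.Theory.
Import numFieldNormedType.Exports.
Local Open Scope classical_set_scope.
Local Open Scope ring_scope.

(* The z-component space Z = R^m, as row vectors, equipped with its Borel
   sigma-algebra (generated by the open sets) so that we can integrate over
   target points z'. *)
Definition Zsp (R : realType) (m : nat) := g_sigma_algebraType (@open 'rV[R]_m).

Definition conv_hull (R : realType) (V : lmodType R) (A : set V) : set V :=
  [set x | exists (k : nat) (w : 'I_k -> R) (a : 'I_k -> V),
      (forall i, 0 <= w i) /\ \sum_(i < k) w i = 1 /\
      (forall i, A (a i)) /\ x = \sum_(i < k) w i *: a i].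

Definition has_rderiv (R : realType) (V : normedModType R) (f : R -> V)
  (t : R) (d : V) : Prop :=
  (fun h : R => h^-1 *: (f (t + h) - f t)) @ (0 : R)^'+ --> d.

Definition rderiv (R : realType) (V : normedModType R) (f : R -> V) (t : R) : V :=
  lim ((fun h : R => h^-1 *: (f (t + h) - f t)) @ (0 : R)^'+).

Definition ccnf_vf (R : realType) (m : nat)
  (vz : 'rV[R]_m -> 'rV[R]_m -> 'rV[R]_m) (vtau : R -> R -> R)
  (x x' : 'rV[R]_m * R) : 'rV[R]_m * R :=
  (vz x.1 x'.1, vtau x.2 x'.2).

(* z-marginal of the MCNF density:
   p_z(z,t) = int_{Z'} p'_z(z,t|z') q'_z(z') dz', where (because q'_tau is the
   Dirac at tau1) the integration runs over Z'_{tau1} = {z' | (z',tau1) in X'}. *)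
Definition mcnf_pz (R : realType) (m : nat)
  (mu : {measure set (Zsp R m) -> \bar R}) (X' : set ('rV[R]_m * R)) (tau1 : R)
  (pz' : 'rV[R]_m -> R -> 'rV[R]_m -> R) (qz' : 'rV[R]_m -> R)
  (z : 'rV[R]_m) (t : R) : R :=
  Rintegral mu [set z' : Zsp R m | X' (z', tau1)] (fun z' => pz' z t z' * qz' z').

(* The MCNF vector field
     v(x,t) = int_{X'} v'(x|x') p'(x,t|x') q'(x') dx' / p(x,t)
   for an autonomous pair, after integrating out the Dirac deltas
   q'_tau = delta_{tau1} and p'_tau(.,t|tau') = delta_{psi'_tau(tau0,t|tau')}
   (the latter cancels between numerator and denominator):
     v((z,tau),t) = int_{Z'_{tau1}} v'((z,tau)|(z',tau1)) p'_z(z,t|z') q'_z(z') dz'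
                    / p_z(z,t),
   the vector-valued integral being taken componentwise. *)
Definition mcnf_vf (R : realType) (m : nat)
  (mu : {measure set (Zsp R m) -> \bar R}) (X' : set ('rV[R]_m * R)) (tau1 : R)
  (vz : 'rV[R]_m -> 'rV[R]_m -> 'rV[R]_m) (vtau : R -> R -> R)
  (pz' : 'rV[R]_m -> R -> 'rV[R]_m -> R) (qz' : 'rV[R]_m -> R)
  (x : 'rV[R]_m * R) (t : R) : 'rV[R]_m * R :=
  let Z'1 := [set z' : Zsp R m | X' (z', tau1)] in
  let w := fun z' : Zsp R m => pz' x.1 t z' * qz' z' in
  (mcnf_pz mu X' tau1 pz' qz' x.1 t)^-1 *:
    (\row_(i < m) Rintegral mu Z'1
        (fun z' => (ccnf_vf vz vtau x (z', tau1)).1 ord0 i * w z'),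
     Rintegral mu Z'1 (fun z' => (ccnf_vf vz vtau x (z', tau1)).2 * w z')).

(* The derivative of the flow is the MCNF field, which in coordinates is the
   weighted mean (\int g w) / (\int w) of the CCNF field g over the target slice,
   with weight w = p'_z q'_z.  Such a mean lies in the convex hull of the values
   of g on the support of w: otherwise the cone they generate misses 0, so some
   nonzero functional l is nonnegative on it; then l(g) w is nonnegative with
   integral 0, hence vanishes off a null set, and induction on the dimension
   inside ker l (dropping a coordinate where l does not vanish) gives a
   contradiction. *)

From HB Require Import structures.
From mathcomp Require Import all_boot all_order all_algebra.
From mathcomp Require Import all_classical all_reals all_analysis.
From mathcomp Require Import ring lra.
Set Implicit Arguments. Unset Strict Implicit. Unset Printing Implicit Defensive.
Import Order.TTheory GRing.Theory Num.Theory.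
Import numFieldNormedType.Exports.
Local Open Scope classical_set_scope.
Local Open Scope ring_scope.

Section ConvexHull.
Variables (R : realType) (V : lmodType R).
Implicit Types (A B : set V) (x y : V).

Lemma sub_conv_hull A : A `<=` conv_hull A.
Proof.
move=> x Ax; exists 1%N, (fun=> 1), (fun=> x).
by rewrite !big_ord1 scale1r.
Qed.

Lemma conv_hullS A B : A `<=` B -> conv_hull A `<=` conv_hull B.
Proof.
move=> AB _ [k [w [a [w_ge0 [w1 [Aa ->]]]]]].
by exists k, w, a; split=> //; split=> //; split=> // i; apply: AB.
Qed.

Lemma conv_hullD A x y s t : conv_hull A x -> conv_hull A y ->
  0 <= s -> 0 <= t -> s + t = 1 -> conv_hull A (s *: x + t *: y).
Proof.
move=> [k1 [w1 [a1 [w1_ge0 [w1_1 [Aa1 ->]]]]]].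
move=> [k2 [w2 [a2 [w2_ge0 [w2_1 [Aa2 ->]]]]]] s_ge0 t_ge0 st1.
pose cat T (f1 : 'I_k1 -> T) (f2 : 'I_k2 -> T) i :=
  match fintype.split i with inl i1 => f1 i1 | inr i2 => f2 i2 end.
have catl T f1 f2 i : cat T f1 f2 (lshift k2 i) = f1 i.
  by rewrite /cat (unsplitK (inl i : 'I_k1 + 'I_k2)).
have catr T f1 f2 i : cat T f1 f2 (rshift k1 i) = f2 i.
  by rewrite /cat (unsplitK (inr i : 'I_k1 + 'I_k2)).
exists (k1 + k2)%N, (cat _ (fun i => s * w1 i) (fun i => t * w2 i)), (cat _ a1 a2).
split; first by move=> i; rewrite /cat; case: fintype.split => j; apply: mulr_ge0.
split; first by rewrite big_split_ord /= !(eq_bigr _ (fun i _ => catl _ _ _ i))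
  !(eq_bigr _ (fun i _ => catr _ _ _ i)) -!mulr_sumr w1_1 w2_1 !mulr1.
split; first by move=> i; rewrite /cat; case: fintype.split.
rewrite big_split_ord /= !scaler_sumr; congr (_ + _); apply: eq_bigr => i _.
  by rewrite catl catl scalerA.
by rewrite catr catr scalerA.
Qed.

Definition convex_cone (K : set V) :=
  (forall x y, K x -> K y -> K (x + y)) /\
  (forall c x, 0 < c -> K x -> K (c *: x)).

Definition cone_hull A : set V :=
  [set y | exists2 c, 0 < c & exists2 x, conv_hull A x & y = c *: x].

Lemma convex_cone_hull A : convex_cone (cone_hull A).
Proof.
split=> [_ _ [c1 c1_gt0 [x1 Ax1 ->]] [c2 c2_gt0 [x2 Ax2 ->]]|].
  have c_gt0 : 0 < c1 + c2 by rewrite addr_gt0.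
  exists (c1 + c2) => //; exists ((c1 / (c1 + c2)) *: x1 + (c2 / (c1 + c2)) *: x2).
    apply: conv_hullD => //; rewrite ?divr_ge0 ?ltW //.
    by rewrite -mulrDl divff // gt_eqF.
  by rewrite scalerDr !scalerA !mulrA !(mulrC (c1 + c2)) !mulfK // gt_eqF.
move=> c _ c_gt0 [c' c'_gt0 [x Ax ->]].
by exists (c * c'); rewrite ?mulr_gt0 //; exists x; rewrite // scalerA.
Qed.

Lemma sub_cone_hull A : A `<=` cone_hull A.
Proof.
by move=> x Ax; exists 1 => //; exists x; rewrite ?scale1r //; apply: sub_conv_hull.
Qed.

Lemma cone_hull0 A : cone_hull A 0 -> conv_hull A 0.
Proof.
move=> [c c_gt0 [x Ax /eqP]]; rewrite eq_sym scaler_eq0 gt_eqF //= => /eqP x0.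
by rewrite -x0.
Qed.

Lemma conv_hull_imageP (T : Type) (f : T -> V) (S : set T) x :
  conv_hull (f @` S) x <-> exists k (w : 'I_k -> R) (z : 'I_k -> T),
    (forall i, 0 <= w i) /\ \sum_(i < k) w i = 1 /\
    (forall i, S (z i)) /\ x = \sum_(i < k) w i *: f (z i).
Proof.
split=> [[k [w [a [w_ge0 [w1 [Sa ->]]]]]]|[k [w [z [w_ge0 [w1 [Sz ->]]]]]]].
  have /choice[z zP] : forall i, exists z, S z /\ f z = a i.
    by move=> i; have [z Sz <-] := Sa i; exists z.
  exists k, w, z; split=> //; split=> //; split=> [i|]; first by have [] := zP i.
  by apply: eq_bigr => i _; have [_ ->] := zP i.
by exists k, w, (f \o z); split=> //; split=> //; split=> // i; exists (z i).
Qed.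

Lemma conv_hull_image_subr (T : Type) (f : T -> V) (S : set T) b :
  conv_hull ((fun z => f z - b) @` S) 0 -> conv_hull (f @` S) b.
Proof.
move=> /conv_hull_imageP[k [w [z [w_ge0 [w1 [Sz /eqP]]]]]].
rewrite eq_sym (eq_bigr _ (fun i _ => scalerBr _ _ _)) sumrB -scaler_suml w1.
rewrite scale1r subr_eq0 => /eqP sum_b.
by apply/conv_hull_imageP; exists k, w, z.
Qed.

End ConvexHull.

Lemma conv_hull_linear_inj (R : realType) (V W : lmodType R) (f : {linear V -> W})
    (A : set V) x :
  injective f -> conv_hull (f @` A) (f x) -> conv_hull A x.
Proof.
move=> f_inj /conv_hull_imageP[k [w [z [w_ge0 [w1 [Az fx]]]]]].
exists k, w, z; split=> //; split=> //; split=> //; apply: f_inj.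
by rewrite fx linear_sum; apply: eq_bigr => i _; rewrite linearZ.
Qed.

Section ConeSeparation.
Variable R : realType.

Definition ord_cons n (c : R) (l : 'I_n -> R) : 'I_n.+1 -> R :=
  fun i => if unlift ord0 i is Some k then l k else c.

Lemma ord_cons_dot n (c : R) (l : 'I_n -> R) (a : 'I_n.+1 -> R) :
  \sum_i ord_cons c l i * a i = c * a ord0 + \sum_i l i * a (lift ord0 i).
Proof.
rewrite big_ord_recl /ord_cons unlift_none.
by congr (_ + _); apply: eq_bigr => i _; rewrite liftK.
Qed.

Lemma ord_cons_neq0 n (c : R) (l : 'I_n -> R) :
  c != 0 \/ l <> 0 -> ord_cons c l <> 0.
Proof.
move=> cl0 l0; case: cl0 => [/eqP|]; apply.
  by have := congr1 (fun f => f ord0) l0; rewrite /ord_cons unlift_none.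
apply: funext => k; have := congr1 (fun f => f (lift ord0 k)) l0.
by rewrite /ord_cons liftK.
Qed.

Definition cone_slice n (K : set ('I_n.+1 -> R)) : set ('I_n -> R) :=
  [set a \o lift ord0 | a in [set a | K a /\ a ord0 = 0]].

Section Slice.
Variables (n : nat) (K : set ('I_n.+1 -> R)).
Hypothesis coneK : convex_cone K.

Lemma convex_cone_slice : convex_cone (cone_slice K).
Proof.
have [Kadd Kscale] := coneK.
split=> [_ _ [a [Ka a0] <-] [b [Kb b0] <-]|c _ c_gt0 [a [Ka a0] <-]].
  by exists (a + b); [split; [apply: Kadd|rewrite fctE /= a0 b0 addr0]|].
by exists (c *: a); [split; [apply: Kscale|rewrite fctE /= a0 scaler0]|].
Qed.

Lemma cone_slice0 : ~ K 0 -> ~ cone_slice K 0.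
Proof.
move=> K0 [a [Ka a0] a_lift0]; apply: K0; suff <- : a = 0 by [].
apply: funext => i; case: (unliftP ord0 i) => [j ->|->] //.
exact: (congr1 (fun f => f j) a_lift0).
Qed.

(* Eliminating the first coordinate between a point above and one below the
   hyperplane [a ord0 = 0]. *)
Lemma cone_slice_mix a b : K a -> K b -> 0 < a ord0 -> b ord0 < 0 ->
  cone_slice K (((- b ord0) *: a + a ord0 *: b) \o lift ord0).
Proof.
have [Kadd Kscale] := coneK => Ka Kb a_gt0 b_lt0.
exists ((- b ord0) *: a + a ord0 *: b) => //; split.
  by apply: Kadd; apply: Kscale; rewrite ?oppr_gt0.
by change (- b ord0 * a ord0 + a ord0 * b ord0 = 0); ring.
Qed.

Variable l : 'I_n -> R.
Hypothesis l_ge0 : forall y, cone_slice K y -> 0 <= \sum_i l i * y i.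

Let L (a : 'I_n.+1 -> R) := \sum_i l i * a (lift ord0 i).

Lemma slice_functional_bound a b : K a -> K b -> 0 < a ord0 -> b ord0 < 0 ->
  - (L a / a ord0) <= L b / (- b ord0).
Proof.
move=> Ka Kb a_gt0 b_lt0; have nb_gt0 : 0 < - b ord0 by rewrite oppr_gt0.
have := l_ge0 (cone_slice_mix Ka Kb a_gt0 b_lt0).
have -> : \sum_i l i * (((- b ord0) *: a + a ord0 *: b) \o lift ord0) i =
    (- b ord0) * L a + a ord0 * L b.
  rewrite /L !mulr_sumr -big_split; apply: eq_bigr => i _ /=.
  by change (l i * (- b ord0 * a (lift ord0 i) + a ord0 * b (lift ord0 i)) =
    - b ord0 * (l i * a (lift ord0 i)) + a ord0 * (l i * b (lift ord0 i))); ring.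
move=> mix_ge0; rewrite -subr_ge0 opprK.
have -> : L b / - b ord0 + L a / a ord0 =
    ((- b ord0) * L a + a ord0 * L b) / (a ord0 * (- b ord0)).
  by field; rewrite lt_eqF // gt_eqF.
by rewrite divr_ge0 // mulr_ge0 // ltW.
Qed.

(* [slice_functional_bound] leaves room for a first coefficient: the supremum of
   the lower bounds [- L a / a ord0]. *)
Lemma slice_functional_extend a1 a2 :
  K a1 -> 0 < a1 ord0 -> K a2 -> a2 ord0 < 0 ->
  exists c, forall a, K a -> 0 <= c * a ord0 + L a.
Proof.
move=> Ka1 a1_gt0 Ka2 a2_lt0.
pose S := [set r | exists2 a, K a /\ 0 < a ord0 & r = - (L a / a ord0)].
have S_ub b : K b -> b ord0 < 0 -> ubound S (L b / (- b ord0)).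
  by move=> Kb b_lt0 _ [a [Ka a_gt0] ->]; apply: slice_functional_bound.
have S_has_sup : has_sup S.
  by split; [exists (- (L a1 / a1 ord0)), a1|exists (L a2 / (- a2 ord0)); apply: S_ub].
exists (sup S) => a Ka; have [a_lt0|a_gt0|a0] := ltgtP (a ord0) 0.
- have : sup S <= L a / (- a ord0) by apply: ge_sup; [case: S_has_sup|apply: S_ub].
  by rewrite ler_pdivlMr ?oppr_gt0 // => ?; nra.
- have : - (L a / a ord0) <= sup S by apply: ub_le_sup; [case: S_has_sup|exists a].
  have := divfK (lt0r_neq0 a_gt0) (L a).
  by move: (L a / a ord0) => q <- ?; nra.
- by rewrite a0 mulr0 add0r; apply: (l_ge0 (y := a \o lift ord0)); exists a.
Qed.

End Slice.

Lemma convex_cone_nonneg_functional n (K : set ('I_n -> R)) :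
  convex_cone K -> ~ K 0 -> K !=set0 ->
  exists2 l : 'I_n -> R, l <> 0 & forall a, K a -> 0 <= \sum_i l i * a i.
Proof.
elim: n K => [|n IH] K coneK K0 [a0 Ka0].
  by exfalso; apply: K0; suff -> : 0 = a0 by []; apply: funext => -[].
have [K_ge0|] := pselect (forall a, K a -> 0 <= a ord0).
  exists (ord_cons 1 0); first by apply: ord_cons_neq0; left; apply: oner_neq0.
  move=> a Ka; rewrite ord_cons_dot big1 ?mul1r ?addr0 ?K_ge0 // => i _.
  by rewrite mul0r.
move=> /existsNP[a2 /not_implyP[Ka2 /negP]]; rewrite -ltNge => a2_lt0.
have [K_le0|] := pselect (forall a, K a -> a ord0 <= 0).
  exists (ord_cons (-1) 0).
    by apply: ord_cons_neq0; left; rewrite oppr_eq0 oner_neq0.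
  move=> a Ka; rewrite ord_cons_dot big1 ?addr0 => [|i _]; last by rewrite mul0r.
  by rewrite mulN1r oppr_ge0 K_le0.
move=> /existsNP[a1 /not_implyP[Ka1 /negP]]; rewrite -ltNge => a1_gt0.
have [l l0 l_ge0] := IH _ (convex_cone_slice coneK) (cone_slice0 K0)
  (ex_intro _ _ (cone_slice_mix coneK Ka1 Ka2 a1_gt0 a2_lt0)).
have [c c_ge0] := slice_functional_extend coneK l_ge0 Ka1 a1_gt0 Ka2 a2_lt0.
exists (ord_cons c l); first by apply: ord_cons_neq0; right.
by move=> a Ka; rewrite ord_cons_dot c_ge0.
Qed.

Lemma eq0_of_lift_eq0 n (l x : 'I_n.+1 -> R) j : l j != 0 ->
  \sum_i l i * x i = 0 -> (forall i, x (lift j i) = 0) -> x = 0.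
Proof.
move=> lj0 lx0 x_lift0; have xj0 : x j = 0.
  move: lx0; rewrite (bigD1 j) //= big1 ?addr0 => [/eqP|i ij].
    by rewrite mulf_eq0 (negbTE lj0) => /eqP.
  by case: (unliftP j i) ij => [k ->|->]; rewrite ?eqxx // x_lift0 mulr0.
by apply: funext => i; case: (unliftP j i) => [k ->|->].
Qed.

(* A point of the kernel of [l] is determined by its coordinates off [j]. *)
Lemma conv_hull_lift n (A : set ('I_n.+1 -> R)) (l : 'I_n.+1 -> R) j :
  l j != 0 ->
  (forall a, A a -> \sum_i l i * a i = 0) ->
  conv_hull ((fun a => a \o lift j) @` A) 0 -> conv_hull A 0.
Proof.
move=> lj0 lA0 /conv_hull_imageP[k [w [a [w_ge0 [w1 [Aa sum0]]]]]].
suff <- : \sum_(p < k) w p *: a p = 0 by exists k, w, a.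
apply: (eq0_of_lift_eq0 lj0).
  rewrite (eq_bigr (fun i => \sum_p w p * (l i * a p i))); last first.
    by move=> i _; rewrite fct_sumE mulr_sumr; apply: eq_bigr => p _; rewrite mulrCA.
  rewrite exchange_big big1 // => p _.
  by rewrite -mulr_sumr lA0 ?mulr0.
by move=> i; have := congr1 (fun f => f i) sum0; rewrite /= !fct_sumE => <-.
Qed.

End ConeSeparation.

Section Barycenter.
Context d (T : measurableType d) (R : realType) (mu : {measure set T -> \bar R}).
Implicit Types (D N : set T) (f w : T -> R).

Lemma EFin_Rintegral D f : measurable D -> mu.-integrable D (EFin \o f) ->
  (\int[mu]_(z in D) f z)%:E = (\int[mu]_(z in D) (f z)%:E)%E.
Proof. by move=> mD f_int; rewrite fineK // (integrable_fin_num mD f_int). Qed.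

Lemma integrable_sumr D (I : Type) (s : seq I) (f : I -> T -> R) : measurable D ->
  (forall i, mu.-integrable D (EFin \o f i)) ->
  mu.-integrable D (EFin \o fun z => \sum_(i <- s) f i z).
Proof.
move=> mD f_int; have -> : EFin \o (fun z => \sum_(i <- s) f i z) =
    (fun z => \sum_(i <- s) (f i z)%:E)%E by apply: funext => z; rewrite /= sumEFin.
by apply: integrable_sum => // i _; apply: f_int.
Qed.

Lemma Rintegral_sum D (I : Type) (s : seq I) (f : I -> T -> R) : measurable D ->
  (forall i, mu.-integrable D (EFin \o f i)) ->
  \int[mu]_(z in D) (\sum_(i <- s) f i z) = \sum_(i <- s) \int[mu]_(z in D) f i z.
Proof.
move=> mD f_int; apply: EFin_inj; rewrite EFin_Rintegral ?integrable_sumr //.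
under eq_integral do rewrite -sumEFin.
rewrite integral_sum // -sumEFin; apply: eq_bigr => i _.
by rewrite EFin_Rintegral.
Qed.

Lemma Rintegral_setD_null D N f : measurable D -> measurable N -> mu N = 0 ->
  mu.-integrable D (EFin \o f) ->
  \int[mu]_(z in D `\` N) f z = \int[mu]_(z in D) f z.
Proof.
by move=> mD mN N0 f_int; rewrite /Rintegral (negligible_integral mN mD f_int N0).
Qed.

Lemma Rintegral_gt0_witness D w : (forall z, D z -> 0 <= w z) ->
  0 < \int[mu]_(z in D) w z -> exists2 z, D z & 0 < w z.
Proof.
move=> w_ge0 w_gt0; apply: contrapT => no_witness; move: w_gt0.
rewrite /Rintegral integral0_eq ?ltxx // => z Dz; congr EFin.
apply/eqP; rewrite eq_le w_ge0 // andbT leNgt; apply/negP => wz.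
by apply: no_witness; exists z.
Qed.

Lemma Rintegral_ge0_eq0_null D f : measurable D -> (forall z, D z -> 0 <= f z) ->
  mu.-integrable D (EFin \o f) -> \int[mu]_(z in D) f z = 0 ->
  exists N, [/\ measurable N, mu N = 0 & forall z, D z -> ~ N z -> f z = 0].
Proof.
move=> mD f_ge0 f_int f0.
have : ae_eq mu D (EFin \o f) (cst 0%E).
  apply/ae_eq_integral_abs => //; first exact: measurable_int f_int.
  rewrite -[0%E]/(0%:E) -f0 EFin_Rintegral //.
  by apply: eq_integral => z /set_mem Dz; rewrite gee0_abs // lee_fin f_ge0.
case=> N [mN N0 fN]; exists N; split=> // z Dz Nz.
by apply: contrapT => fz0; apply: Nz; apply: fN => /(_ Dz) [].
Qed.

Lemma integrableZl_real D f (k : R) :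
  measurable D -> mu.-integrable D (EFin \o f) ->
  mu.-integrable D (EFin \o fun z => k * f z).
Proof.
move=> mD f_int; apply: (eq_integrable mD _ _ _ (integrableZl mD k f_int)) => z _.
by rewrite /= EFinM.
Qed.

Lemma functional_Rintegral_eq0_null n D w (g : T -> 'I_n -> R) (l : 'I_n -> R) :
  measurable D -> (forall z, D z -> 0 <= w z) ->
  (forall i, mu.-integrable D (EFin \o fun z => g z i * w z)) ->
  (forall i, \int[mu]_(z in D) (g z i * w z) = 0) ->
  (forall z, D z -> 0 < w z -> 0 <= \sum_i l i * g z i) ->
  exists N, [/\ measurable N, mu N = 0 &
    forall z, D z -> ~ N z -> 0 < w z -> \sum_i l i * g z i = 0].
Proof.
move=> mD w_ge0 gw_int gw0 lg_ge0.
pose F z := \sum_i l i * (g z i * w z).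
have FE z : F z = (\sum_i l i * g z i) * w z.
  by rewrite mulr_suml; apply: eq_bigr => i _; rewrite mulrA.
have F_ge0 z : D z -> 0 <= F z.
  move=> Dz; rewrite FE; have [->|wz_neq0] := eqVneq (w z) 0; first by rewrite mulr0.
  have wz_gt0 : 0 < w z by rewrite lt_neqAle eq_sym wz_neq0 w_ge0.
  by rewrite mulr_ge0 ?lg_ge0 // ltW.
have F_int : mu.-integrable D (EFin \o F).
  by apply: integrable_sumr => // i; apply: integrableZl_real.
have F0 : \int[mu]_(z in D) F z = 0.
  rewrite Rintegral_sum // => [|i]; last exact: integrableZl_real.
  by rewrite big1 // => i _; rewrite RintegralZl // gw0 mulr0.
have [N [mN N0 FN]] := Rintegral_ge0_eq0_null mD F_ge0 F_int F0.
exists N; split=> // z Dz Nz wz_gt0; apply/eqP.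
by have /eqP := FN z Dz Nz; rewrite FE mulf_eq0 (gt_eqF wz_gt0) orbF.
Qed.

Lemma conv_hull_Rintegral_eq0 n D w (g : T -> 'I_n -> R) :
  measurable D -> (forall z, D z -> 0 <= w z) ->
  mu.-integrable D (EFin \o w) -> 0 < \int[mu]_(z in D) w z ->
  (forall i, mu.-integrable D (EFin \o fun z => g z i * w z)) ->
  (forall i, \int[mu]_(z in D) (g z i * w z) = 0) ->
  conv_hull (g @` [set z | D z /\ 0 < w z]) 0.
Proof.
elim: n D g => [|n IH] D g mD w_ge0 w_int w_gt0 gw_int gw0;
  have [z0 Dz0 wz0] := Rintegral_gt0_witness w_ge0 w_gt0.
  by apply: sub_conv_hull; exists z0 => //; apply: funext => -[].
apply: contrapT => not_conv.
have g_cone z : D z -> 0 < w z -> cone_hull (g @` [set z | D z /\ 0 < w z]) (g z).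
  by move=> Dz wz; apply: sub_cone_hull; exists z.
have [l l0 l_ge0] := convex_cone_nonneg_functional (convex_cone_hull _)
  (fun K0 => not_conv (cone_hull0 K0)) (ex_intro _ _ (g_cone z0 Dz0 wz0)).
have [N [mN N0 lg0]] := functional_Rintegral_eq0_null mD w_ge0 gw_int gw0
  (fun z Dz wz => l_ge0 _ (g_cone z Dz wz)).
have [j lj0] : exists j, l j != 0.
  apply: contrapT => l_eq0; apply: l0; apply: funext => i.
  by apply/eqP/negPn/negP => li; apply: l_eq0; exists i.
have mDN : measurable (D `\` N) by exact: measurableD.
have DN_sub : D `\` N `<=` D by move=> z [].
have supp_sub : [set z | (D `\` N) z /\ 0 < w z] `<=` [set z | D z /\ 0 < w z].
  by move=> z [[Dz _] wz].
apply: not_conv; apply: (conv_hullS (image_subset g supp_sub)).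
apply: (conv_hull_lift lj0); first by move=> _ [z [[Dz Nz] wz] <-]; apply: lg0.
rewrite image_comp; apply: IH => // [z [Dz _]|||i|i].
- exact: w_ge0.
- exact: integrableS mD mDN DN_sub w_int.
- by rewrite Rintegral_setD_null.
- exact: integrableS mD mDN DN_sub (gw_int (lift j i)).
- rewrite Rintegral_setD_null //; last exact: (gw_int (lift j i)).
  exact: (gw0 (lift j i)).
Qed.

Lemma conv_hull_Rintegral_mean n D w (g : T -> 'I_n -> R) :
  measurable D -> (forall z, D z -> 0 <= w z) ->
  mu.-integrable D (EFin \o w) -> 0 < \int[mu]_(z in D) w z ->
  (forall i, mu.-integrable D (EFin \o fun z => g z i * w z)) ->
  conv_hull (g @` [set z | D z /\ 0 < w z])
    (fun i => (\int[mu]_(z in D) w z)^-1 * \int[mu]_(z in D) (g z i * w z)).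
Proof.
move=> mD w_ge0 w_int w_gt0 gw_int; set b := (fun i : 'I_n => _).
have bw_int i : mu.-integrable D (EFin \o fun z => b i * w z).
  exact: integrableZl_real.
have gbE i : (fun z => (g z - b) i * w z) = (fun z => g z i * w z - b i * w z).
  by apply: funext => z; rewrite mulrBl.
apply: conv_hull_image_subr; apply: conv_hull_Rintegral_eq0 => // i; rewrite gbE.
  apply: (eq_integrable mD _ _ _ (integrableB mD (gw_int i) (bw_int i))) => z _.
  by rewrite /= EFinB.
rewrite RintegralB // RintegralZl // /b mulrAC mulVf ?mul1r ?subrr //.
by rewrite gt_eqF.
Qed.

End Barycenter.

Definition pair_coord (R : realType) m (p : 'rV[R]_m * R) : 'I_m.+1 -> R :=
  fun i => if unlift ord_max i is Some k then p.1 ord0 k else p.2.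

Lemma pair_coord_is_linear (R : realType) m : linear (@pair_coord R m).
Proof.
move=> a p q; apply: funext => i; rewrite !fctE /pair_coord.
by case: unlift => [k|] //=; rewrite !mxE.
Qed.

HB.instance Definition _ (R : realType) m :=
  GRing.isLinear.Build R ('rV[R]_m * R)%type ('I_m.+1 -> R) *:%R (@pair_coord R m)
    (@pair_coord_is_linear R m).

Lemma pair_coord_inj (R : realType) m : injective (@pair_coord R m).
Proof.
move=> [p1 p2] [q1 q2] pq; congr pair; last first.
  by have := congr1 (fun f => f ord_max) pq; rewrite /pair_coord unlift_none.
apply/rowP => k.
have := congr1 (fun f => f (lift ord_max k)) pq; rewrite /pair_coord liftK /=.
by rewrite !(ord1 (0 : 'I_1)).
Qed.

Lemma has_rderivE (R : realType) (V : normedModType R) (f : R -> V) t d :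
  has_rderiv f t d -> rderiv f t = d.
Proof. by move=> f_d; apply: cvg_lim. Qed.

Lemma pair_coord_mcnf_vf (R : realType) (m : nat)
  (mu : {measure set (Zsp R m) -> \bar R}) (X' : set ('rV[R]_m * R)) (tau1 : R)
  (vz : 'rV[R]_m -> 'rV[R]_m -> 'rV[R]_m) (vtau : R -> R -> R)
  (pz' : 'rV[R]_m -> R -> 'rV[R]_m -> R) (qz' : 'rV[R]_m -> R) x t :
  let Z'1 := [set z' : Zsp R m | X' (z', tau1)] in
  let w := fun z' : Zsp R m => pz' x.1 t z' * qz' z' in
  pair_coord (mcnf_vf mu X' tau1 vz vtau pz' qz' x t) =
  fun i => (\int[mu]_(z' in Z'1) w z')^-1 *
    \int[mu]_(z' in Z'1) (pair_coord (ccnf_vf vz vtau x (z', tau1)) i * w z').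
Proof.
by apply: funext => i; rewrite /pair_coord; case: unlift => [k|] //=; rewrite !mxE.
Qed.

Theorem corollary4p14 (R : realType) (m : nat)
  (mu : {measure set (Zsp R m) -> \bar R})
  (Zs : set 'rV[R]_m) (Ts : set R) (X' : set ('rV[R]_m * R))
  (tau0 tau1 : R)
  (vz : 'rV[R]_m -> 'rV[R]_m -> 'rV[R]_m) (vtau : R -> R -> R)
  (pz' : 'rV[R]_m -> R -> 'rV[R]_m -> R) (qz' : 'rV[R]_m -> R)
  (psi : 'rV[R]_m * R -> R -> 'rV[R]_m * R) :
  (* target set X' inside X = Z x T; tau0 <> tau1 *)
  X' `<=` Zs `*` Ts ->
  tau0 != tau1 ->
  measurable [set z' : Zsp R m | X' (z', tau1)] ->
  (* q'_z is a probability density on the target slice (q'_tau = delta_tau1) *)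
  (forall z', 0 <= qz' z') ->
  measurable_fun [set z' : Zsp R m | X' (z', tau1)] (qz' : Zsp R m -> R) ->
  (\int[mu]_(z' in [set z' : Zsp R m | X' (z', tau1)]) (qz' z')%:E = 1)%E ->
  (* p'_z(., t | z') are probability densities on Z *)
  (forall z t z', 0 <= pz' z t z') ->
  (forall t z', 0 <= t ->
     (\int[mu]_(z in (Zs : set (Zsp R m))) (pz' z t z')%:E = 1)%E) ->
  (* the MCNF density is positive, so that v is well defined *)
  (forall z t, Zs z -> 0 <= t -> 0 < mcnf_pz mu X' tau1 pz' qz' z t) ->
  (* the integrals defining p and v exist *)
  (forall z t, Zs z -> 0 <= t ->
     mu.-integrable [set z' : Zsp R m | X' (z', tau1)]
       (fun z' : Zsp R m => (pz' z t z' * qz' z')%:E)) ->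
  (forall z tau t (i : 'I_m), Zs z -> Ts tau -> 0 <= t ->
     mu.-integrable [set z' : Zsp R m | X' (z', tau1)]
       (fun z' : Zsp R m =>
          ((ccnf_vf vz vtau (z, tau) (z', tau1)).1 ord0 i
             * (pz' z t z' * qz' z'))%:E)) ->
  (forall z tau t, Zs z -> Ts tau -> 0 <= t ->
     mu.-integrable [set z' : Zsp R m | X' (z', tau1)]
       (fun z' : Zsp R m =>
          ((ccnf_vf vz vtau (z, tau) (z', tau1)).2
             * (pz' z t z' * qz' z'))%:E)) ->
  (* psi is the flow map of the MCNF: it stays in X and
     d/dt psi(x,t) = v(psi(x,t),t) for t >= 0 *)
  (forall x t, (Zs `*` Ts) x -> 0 <= t -> (Zs `*` Ts) (psi x t)) ->
  (forall x t, (Zs `*` Ts) x -> 0 <= t ->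
     has_rderiv (psi x) t
       (mcnf_vf mu X' tau1 vz vtau pz' qz' (psi x t) t)) ->
  forall x t, (Zs `*` Ts) x -> 0 <= t ->
    conv_hull (ccnf_vf vz vtau (psi x t) @` X') (rderiv (psi x) t).
Proof.
move=> _ _ mX'1 qz'_ge0 _ _ pz'_ge0 _ pz_gt0 pq_int vz_int vtau_int psiX psi_deriv
  x t xX t_ge0.
have [yZ yT] := psiX x t xX t_ge0.
rewrite (has_rderivE (psi_deriv x t xX t_ge0)); set y := psi x t in yZ yT *.
pose V z' := ccnf_vf vz vtau y (z', tau1).
have V_X' : V @` [set z' | X' (z', tau1) /\ 0 < pz' y.1 t z' * qz' z'] `<=`
    ccnf_vf vz vtau y @` X' by move=> _ [z' [X'z' _] <-]; exists (z', tau1).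
apply: (conv_hullS V_X').
apply: (conv_hull_linear_inj (f := @pair_coord R m : {linear _ -> _})).
  exact: pair_coord_inj.
rewrite image_comp /= pair_coord_mcnf_vf.
apply: (@conv_hull_Rintegral_mean _ _ _ mu _ [set z' : Zsp R m | X' (z', tau1)]
  (fun z' => pz' y.1 t z' * qz' z') (@pair_coord R m \o V)) => // [z' _|||i].
- exact: mulr_ge0.
- exact: pq_int.
- exact: pz_gt0.
- rewrite /comp /pair_coord; case: (unlift ord_max i) => [k|].
    exact: vz_int.
  exact: vtau_int.
Qed.
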